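(* Let $A$ be a nonzero commutative nilpotent $\mathbb{F}_p$-algebra of finite dimension with $A^e\ne0$, $A^{e+1}=0$, let $t_r=\dim_{\mathbb{F}_p}(N_r/N_{r-1})$ for $1\le r\le e$, and let $t_M=\max_r t_r$. Then the number of ideals of $A$ is at least $p^{\lfloor t_M^2/4\rfloor}$.
   Context: Algebras are commutative, associative, not necessarily unital. $N_k=\{a\in A: x_1\cdots x_k a=0\ \forall x_1,\dots,x_k\in A\}$, $N_0=0$. *)

(* A finite-dimensional commutative associative (not
   necessarily unital) F_p-algebra of dimension n is modelled as the
   F_p-vector space 'rV['F_p]_n equipped with a bilinear, commutative,
   associative multiplication [mul]. *)
From HB Require Import structures.
From mathcomp Require Import all_boot all_order all_algebra.
Set Implicit Arguments. Unset Strict Implicit. Unset Printing Implicit Defensive.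
Import Order.TTheory GRing.Theory.
Local Open Scope ring_scope.

Section AlgDefs.
Variables (p n : nat).
Local Notation V := 'rV['F_p]_n.
Variable mul : V -> V -> V.

(* the algebra axioms: bilinear (left-linear + commutative), commutative, associative *)
Definition comm_assoc_algebra : Prop :=
  [/\ forall (c : 'F_p) (x y z : V), mul (c *: x + y) z = c *: mul x z + mul y z,
      forall x y : V, mul x y = mul y x
    & forall x y z : V, mul x (mul y z) = mul (mul x y) z].

Definition lprod (xs : seq V) (a : V) : V := foldr mul a xs.

Definition is_subspace (S : {set V}) : bool :=
  [&& (0 : V) \in S,
      [forall x in S, forall y in S, x + y \in S]
    & [forall c : 'F_p, forall x in S, c *: x \in S]].

Definition is_ideal (I : {set V}) : bool :=
  is_subspace I && [forall a : V, forall x in I, mul a x \in I].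

Definition ideals : {set {set V}} := [set I | is_ideal I].

(* N_k = { a | x1 ... xk a = 0 for all x1..xk }, so N_0 = 0 *)
Definition Nk (k : nat) : {set V} :=
  [set a | [forall xs : k.-tuple V, lprod xs a == 0]].

(* A^k = subspace spanned by all products of k elements (k >= 1) *)
Definition kprods (k : nat) : {set V} :=
  [set lprod xs x | x : V, xs : (k.-1).-tuple V].
Definition Apow (k : nat) : {set V} :=
  \bigcap_(S : {set V} | is_subspace S && (kprods k \subset S)) S.

(* F_p-dimension of a (finite) subspace S : #|S| = p ^ fdim S *)
Definition fdim (S : {set V}) : nat := logn p #|S|.

Definition tr (r : nat) : nat := (fdim (Nk r) - fdim (Nk r.-1))%N.

End AlgDefs.

(* For each r, the multiplication maps N_r into N_(r-1), so every subspace
   squeezed between N_(r-1) and N_r is an ideal.  If N_r / N_(r-1) has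
   dimension t = k + l, the subspaces N_(r-1) + graph(M) for k x l matrices M
   over F_p are pairwise distinct, giving p^(k l) ideals; k = t/2 yields the
   bound p^(t^2/4). *)
From HB Require Import structures.
From mathcomp Require Import all_boot all_order all_algebra.
From mathcomp Require Import zify.
Set Implicit Arguments. Unset Strict Implicit. Unset Printing Implicit Defensive.
Import GRing.Theory.
Local Open Scope ring_scope.

Section Subspaces.
Variables (F : finFieldType) (n : nat).
Local Notation V := 'rV[F]_n.

Definition subspace_closed (S : {set V}) : Prop :=
  0 \in S /\ forall c x y, x \in S -> y \in S -> c *: x + y \in S.

Section Closed.
Variables (S : {set V}) (S_closed : subspace_closed S).

Lemma subspaceD x y : x \in S -> y \in S -> x + y \in S.
Proof. by case: S_closed => _ hS xS yS; have := hS 1 x y xS yS; rewrite scale1r. Qed.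

Lemma subspaceZ c x : x \in S -> c *: x \in S.
Proof. by case: S_closed => S0 hS xS; have := hS c x 0 xS S0; rewrite addr0. Qed.

Lemma subspace_sum (I : finType) (G : I -> V) :
  (forall i, G i \in S) -> \sum_i G i \in S.
Proof.
move=> SG; apply: (big_ind (fun x => x \in S)) => //.
  by case: S_closed.
exact: subspaceD.
Qed.

Definition enum_mx : 'M[F]_(#|S|, n) := \matrix_(i < #|S|) enum_val i.

Lemma sub_enum_mx x : (x <= enum_mx)%MS = (x \in S).
Proof.
apply/idP/idP => [/submxP[D ->] | xS].
  rewrite mulmx_sum_row; apply: subspace_sum => i.
  by rewrite rowK subspaceZ ?enum_valP.
by have := row_sub (enum_rank_in xS x) enum_mx; rewrite rowK enum_rankK_in.
Qed.

End Closed.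

Lemma card_submx m (B : 'M[F]_(m, n)) :
  #|[set x : V | (x <= B)%MS]| = (#|F| ^ \rank B)%N.
Proof.
have -> : [set x : V | (x <= B)%MS] = [set v *m row_base B | v : 'rV_(\rank B)].
  apply/setP => x; rewrite inE -(eq_row_base B); apply/idP/imsetP.
    by case/submxP=> D ->; exists D.
  by case=> v _ ->; rewrite submxMl.
rewrite card_imset; last exact: row_free_inj (row_base_free B).
by rewrite card_mx mul1n.
Qed.

Lemma card_subspace S (S_closed : subspace_closed S) :
  #|S| = (#|F| ^ \rank (enum_mx S))%N.
Proof.
rewrite -card_submx; apply: eq_card => x.
by rewrite inE sub_enum_mx.
Qed.

(* [graph_space M] is [S] plus the graph of [M], in the coordinates given by
   the rows of [P]. *)
Section Graph.
Variables (S : {set V}) (k l : nat) (P : 'M[F]_(k + l, n)).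
Hypotheses (S_closed : subspace_closed S)
           (P_free_mod_S : forall w, w *m P \in S -> w = 0).

Definition graph_space (M : 'M[F]_(k, l)) : {set V} :=
  [set u + v *m row_mx 1%:M M *m P | u in S, v in [set: 'rV_k]].

Lemma graph_space_closed M : subspace_closed (graph_space M).
Proof.
have [S0 _] := S_closed; split.
  by apply/imset2P; exists 0 0; rewrite ?inE ?mul0mx ?addr0.
move=> c _ _ /imset2P[u1 v1 u1S _ ->] /imset2P[u2 v2 u2S _ ->].
apply/imset2P; exists (c *: u1 + u2) (c *: v1 + v2); rewrite ?inE //.
  by case: S_closed => _; apply.
by rewrite !mulmxDl -!scalemxAl scalerDr addrACA.
Qed.

Lemma sub_graph_space M : S \subset graph_space M.
Proof. by apply/subsetP=> u uS; apply/imset2P; exists u 0; rewrite ?inE ?mul0mx ?addr0. Qed.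

Lemma graph_space_sub T M : subspace_closed T -> S \subset T ->
  (forall w, w *m P \in T) -> graph_space M \subset T.
Proof.
move=> T_closed sST PT; apply/subsetP=> x /imset2P[u v uS _ ->].
by rewrite subspaceD ?PT // (subsetP sST).
Qed.

Lemma graph_space_inj : injective graph_space.
Proof.
move=> M M' eqMM'; apply/row_matrixP=> i; rewrite !rowE.
have : 'e_i *m row_mx 1%:M M *m P \in graph_space M'.
  by rewrite -eqMM'; apply/imset2P; exists 0 'e_i; rewrite ?inE ?add0r; case: S_closed.
case/imset2P=> u v uS _ def_u.
have : ('e_i *m row_mx 1%:M M - v *m row_mx 1%:M M') *m P \in S.
  by rewrite mulmxBl def_u addrK.
move/P_free_mod_S/eqP; rewrite subr_eq0 !mul_mx_row !mulmx1.
by case/eqP/eq_row_mx=> <- ->.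
Qed.

Lemma card_graph_spaces :
  #|[set graph_space M | M : 'M[F]_(k, l)]| = (#|F| ^ (k * l))%N.
Proof. by rewrite card_imset ?card_mx //; exact: graph_space_inj. Qed.

End Graph.
End Subspaces.

Section NilpotentAlgebra.
Variables (p n : nat) (mul : 'rV['F_p]_n -> 'rV['F_p]_n -> 'rV['F_p]_n).
Hypotheses (p_pr : prime p) (mul_alg : comm_assoc_algebra mul).
Local Notation V := 'rV['F_p]_n.

Lemma mul_linear_r c x y z : mul x (c *: y + z) = c *: mul x y + mul x z.
Proof. by case: mul_alg => linl mulC _; rewrite mulC linl !(mulC x). Qed.

Lemma mulr0_alg x : mul x 0 = 0.
Proof.
have := mul_linear_r 1 x 0 0; rewrite !scale1r addr0 => mul_x0_twice.
by apply: (addrI (mul x 0)); rewrite addr0 -mul_x0_twice.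
Qed.

Lemma lprod_linear xs c a b :
  lprod mul xs (c *: a + b) = c *: lprod mul xs a + lprod mul xs b.
Proof. by elim: xs => [//|x xs IH] /=; rewrite IH mul_linear_r. Qed.

Lemma lprod0 xs : lprod mul xs 0 = 0.
Proof. by elim: xs => [//|x xs IH] /=; rewrite IH mulr0_alg. Qed.

Lemma Nk_closed k : subspace_closed (Nk mul k).
Proof.
split; first by rewrite inE; apply/forallP=> xs; rewrite lprod0.
move=> c x y; rewrite !inE => /forallP xN /forallP yN; apply/forallP=> xs.
by rewrite lprod_linear (eqP (xN xs)) (eqP (yN xs)) scaler0 addr0.
Qed.

Lemma Nk_mul s a x : x \in Nk mul s.+1 -> mul a x \in Nk mul s.
Proof.
rewrite !inE => /forallP xN; apply/forallP=> xs.
by have := xN [tuple of rcons xs a]; rewrite /lprod /= -cats1 foldr_cat.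
Qed.

Lemma Nk_subset_succ s : Nk mul s \subset Nk mul s.+1.
Proof.
apply/subsetP=> x; rewrite !inE => /forallP xN; apply/forallP=> xs.
by rewrite (tuple_eta xs) /= (eqP (xN (behead_tuple xs))) mulr0_alg.
Qed.

Lemma ideal_between s (U : {set V}) : subspace_closed U ->
  Nk mul s \subset U -> U \subset Nk mul s.+1 -> U \in ideals mul.
Proof.
move=> U_closed sNU sUN; have [U0 _] := U_closed.
rewrite inE /is_ideal /is_subspace U0; apply/andP; split.
  apply/and3P; split=> //.
    by apply/forall_inP=> x xU; apply/forall_inP=> y yU; rewrite subspaceD.
  by apply/forallP=> c; apply/forall_inP=> x xU; rewrite subspaceZ.
apply/forallP=> a; apply/forall_inP=> x xU.
by rewrite (subsetP sNU) // Nk_mul // (subsetP sUN).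
Qed.

Lemma card_ideals_gt0 : (0 < #|ideals mul|)%N.
Proof.
apply/card_gt0P; exists (Nk mul 0).
exact: ideal_between (Nk_closed 0) (subxx _) (Nk_subset_succ 0).
Qed.

Lemma card_ideals_graph s m (P : 'M['F_p]_(m, n)) k l : (k + l)%N = m ->
  (forall w, w *m P \in Nk mul s.+1) -> (forall w, w *m P \in Nk mul s -> w = 0) ->
  (p ^ (k * l) <= #|ideals mul|)%N.
Proof.
move=> def_m; subst m => P_upper P_free.
have graphs_ideals : [set graph_space (Nk mul s) P M | M : 'M_(k, l)] \subset ideals mul.
  apply/subsetP=> _ /imsetP[M _ ->].
  apply: ideal_between (graph_space_closed P (Nk_closed s) M) (sub_graph_space _ P M) _.
  exact: graph_space_sub (Nk_closed s.+1) (Nk_subset_succ s) P_upper.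
apply: leq_trans (subset_leq_card graphs_ideals).
by rewrite (card_graph_spaces (Nk_closed s) P_free) card_Fp.
Qed.

Lemma fdim_Nk k : fdim (Nk mul k) = \rank (enum_mx (Nk mul k)).
Proof.
rewrite /fdim [X in logn p X](card_subspace (Nk_closed k)).
by rewrite [X in (X ^ _)%N](_ : _ = p) ?pfactorK //; exact: card_Fp.
Qed.

Lemma sqrn_div4_le_halves t : (t ^ 2 %/ 4 <= t./2 * (t - t./2))%N.
Proof.
rewrite -divn2; have := divn_eq t 2; have := ltn_pmod t (isT : 0 < 2)%N.
set q := (t %/ 2)%N; set r := (t %% 2)%N => r_lt2 def_t.
have [r0 | r1] : r = 0%N \/ r = 1%N by lia.
  by rewrite def_t r0 addn0 (_ : ((q * 2) ^ 2 = q * (q * 2 - q) * 4)%N) ?mulnK //; nia.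
by rewrite -ltnS ltn_divLR // def_t r1; nia.
Qed.

Lemma enum_mx_Nk_succ s : (enum_mx (Nk mul s) <= enum_mx (Nk mul s.+1))%MS.
Proof.
apply/row_subP=> i; rewrite (sub_enum_mx (Nk_closed _)) (subsetP (Nk_subset_succ s)) //.
by rewrite -(sub_enum_mx (Nk_closed s)) row_sub.
Qed.

Lemma tr_succE s :
  tr mul s.+1 = \rank (enum_mx (Nk mul s.+1) :\: enum_mx (Nk mul s))%MS.
Proof.
rewrite /tr /= !fdim_Nk -(mxrank_cap_compl (enum_mx (Nk mul s.+1)) (enum_mx (Nk mul s))).
by move/capmx_idPr: (enum_mx_Nk_succ s) => ->; rewrite addKn.
Qed.

Lemma card_ideals_layer r : (p ^ (tr mul r ^ 2 %/ 4) <= #|ideals mul|)%N.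
Proof.
case: r => [|s]; first by rewrite /tr subnn expn0 card_ideals_gt0.
rewrite tr_succE; set D := (_ :\: enum_mx (Nk mul s))%MS.
apply: leq_trans (leq_pexp2l (prime_gt0 p_pr) (sqrn_div4_le_halves _)) _.
apply: (card_ideals_graph (s := s) (P := row_base D)).
- by rewrite subnKC // -divn2 leq_div.
- move=> w; rewrite -(sub_enum_mx (Nk_closed _)).
  by rewrite (submx_trans (submxMl _ _)) // eq_row_base diffmxSl.
- move=> w; rewrite -(sub_enum_mx (Nk_closed _)) => wP_Ns.
  have : (w *m row_base D <= D :&: enum_mx (Nk mul s))%MS.
    by rewrite sub_capmx wP_Ns andbT (submx_trans (submxMl _ _)) ?eq_row_base.
  rewrite capmx_diff submx0 => /eqP wP0.
  by apply: (row_free_inj (row_base_free D)); rewrite wP0 mul0mx.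
Qed.

End NilpotentAlgebra.

Theorem mainTheorem14 (p : nat) (p_pr : prime p) (n : nat) (n_gt0 : (0 < n)%N)
    (mul : 'rV['F_p]_n -> 'rV['F_p]_n -> 'rV['F_p]_n)
    (Halg : comm_assoc_algebra mul) (e : nat)
    (He : Apow mul e != [set 0]) (He1 : Apow mul e.+1 = [set 0]) :
  (p ^ ((\max_(1 <= r < e.+1) tr mul r) ^ 2 %/ 4) <= #|ideals mul|)%N.
Proof.
apply: (big_ind (fun t => p ^ (t ^ 2 %/ 4) <= #|ideals mul|)%N).
- by rewrite expn0 (card_ideals_gt0 Halg).
- by move=> x y tx ty; case: (leqP x y).
- by move=> r _; exact: card_ideals_layer.
Qed.
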